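(* Let $\mathcal{A}=\{\alpha_1<\dots<\alpha_m\}\subset(0,1)$, $|\mathcal{A}|=m$, $d_{\mathcal{A}}=\min_{\alpha\in\mathcal{A}}\min(\alpha,1-\alpha)$. Let $(b_t)$ be base forecasts with $b_t\in\mathcal{K}$ and $(y_t)$ real outcomes with $|y_t-b_t^{\alpha}|\le R$ for all $\alpha\in\mathcal{A}$, all $t$, for some $R>0$. Run MultiQT with constant delay $D\ge0$, learning rate $\eta>0$ and initial hidden offset $\tilde\theta_1\in\mathcal{K}$. Then for every $T\ge1$ and every $\alpha\in\mathcal{A}$, $$\Bigg|\frac{1}{T}\sum_{t=1}^T \mathrm{cov}_t^{\alpha}-\alpha\Bigg|\le \frac{2\|\tilde\theta_1\|_2}{\eta T}+\sqrt{\frac{|\mathcal{A}|(2D+1)}{T}+\frac{2R|\mathcal{A}|^{3/2}}{\eta\, d_{\mathcal{A}}\,T}}+\frac{D|\mathcal{A}|^{1/2}}{T}.$$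
   Context: $\mathcal{K}=\{x\in\mathbb{R}^m:x_1\le\dots\le x_m\}$; $\Pi_C$ denotes Euclidean projection onto a closed convex set $C$, and $C-v=\{x-v:x\in C\}$. MultiQT with constant delay $D\ge0$: for $t=1,2,\dots$, set $\theta_t=\Pi_{\mathcal{K}-b_t}(\tilde\theta_t)$, output $q_t=b_t+\theta_t$ (equivalently $q_t=\Pi_{\mathcal{K}}(b_t+\tilde\theta_t)$), define $\mathrm{cov}_t^{\alpha}=\mathbb{1}\{y_t\le q_t^{\alpha}\}$, and update the hidden offset by $\tilde\theta_{t+1}^{\alpha}=\tilde\theta_t^{\alpha}-\eta(\mathrm{cov}_{t-D}^{\alpha}-\alpha)$ for $t>D$ and $\tilde\theta_{t+1}=\tilde\theta_t$ for $t\le D$ (the outcome $y_s$ becomes available only after the forecast at time $s+D$ is made). *)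

From HB Require Import structures.
From mathcomp Require Import all_boot all_order all_algebra.
From mathcomp Require Import reals.
Set Implicit Arguments. Unset Strict Implicit. Unset Printing Implicit Defensive.
Import Order.TTheory GRing.Theory Num.Theory.
Local Open Scope ring_scope.

Section MultiQT.
Variables (R : realType) (m : nat).

Definition isoK (x : 'I_m -> R) : Prop := forall i j : 'I_m, (i <= j)%N -> x i <= x j.

(* K - v = {x - v : x in K} = {x : x + v in K} *)
Definition shiftK (v : 'I_m -> R) (x : 'I_m -> R) : Prop := isoK (fun i => x i + v i).

Definition sqnorm (x : 'I_m -> R) : R := \sum_(i < m) x i ^+ 2.
Definition norm2 (x : 'I_m -> R) : R := Num.sqrt (sqnorm x).

Definition is_proj (C : ('I_m -> R) -> Prop) (x p : 'I_m -> R) : Prop :=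
  C p /\ forall z, C z -> sqnorm (fun i => x i - p i) <= sqnorm (fun i => x i - z i).

(* d_A = min_alpha min(alpha, 1 - alpha)  (m >= 1 and alpha < 1 make this the true min) *)
Definition dA (alpha : 'I_m -> R) : R :=
  \big[Num.min/1]_(i < m) Num.min (alpha i) (1 - alpha i).

Definition covind (y q : R) : R := ((y <= q)%R)%:R.

End MultiQT.

(* The update telescopes: eta * sum_(s <= T) (cov_s - alpha) = thtil_1 - thtil_(T+D+1), so
   the coverage error is governed by the growth of |thtil_t|^2.  With g_s = cov_s - alpha,
   one update gives |thtil_(t+1)|^2 = |thtil_t|^2 - 2 eta <thtil_t, g_(t-D)> + eta^2 |g_(t-D)|^2.
   During the D steps of delay <thtil, g> moves by at most eta m per step, and
   <thtil_s, g_s> >= - m R: coordinatewise theta_s g_s >= - R, because a forecast farther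
   than R from y_s covers on the correct side, while thtil_s - theta_s pairs nonpositively
   with alpha and nonnegatively with cov_s by the variational inequality of the projection,
   q_s + e alpha and q_s - e cov_s being isotonic for small e > 0.  So |thtil_t|^2 grows by
   at most eta^2 m (2D + 1) + 2 eta m R per step; the factors sqrt m / d_A and the last
   term of the stated bound are slack. *)

From HB Require Import structures.
From mathcomp Require Import all_boot all_order all_algebra.
From mathcomp Require Import reals.
From mathcomp Require Import ring lra.
Set Implicit Arguments. Unset Strict Implicit. Unset Printing Implicit Defensive.
Import Order.TTheory GRing.Theory Num.Theory.
Local Open Scope ring_scope.

Section Euclidean.
Variables (R : realType) (m : nat).
Implicit Types (x p u w h k : 'I_m -> R).

Definition dotp x w : R := \sum_(j < m) x j * w j.

Lemma sqnorm_ge0 x : 0 <= sqnorm x.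
Proof. by apply: sumr_ge0 => j _; exact: sqr_ge0. Qed.

Lemma sqnorm_affine u x w (c : R) : (forall j, u j = x j + c * w j) ->
  sqnorm u = sqnorm x + 2 * c * dotp x w + c ^+ 2 * sqnorm w.
Proof.
move=> Hu; rewrite /sqnorm /dotp !mulr_sumr -!big_split /=.
by apply: eq_bigr => j _; rewrite Hu; ring.
Qed.

Lemma proj_dotp_dir_le0 (C : ('I_m -> R) -> Prop) x p w :
  is_proj C x p -> (forall e : R, 0 < e <= 1 -> C (fun j => p j + e * w j)) ->
  dotp (fun j => x j - p j) w <= 0.
Proof.
move=> [_ p_min] Cp.
set a := dotp _ w; have W0 := sqnorm_ge0 w.
have step e : 0 < e <= 1 -> 2 * e * a <= e ^+ 2 * sqnorm w.
  move=> e01; have := p_min _ (Cp e e01).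
  have -> := sqnorm_affine (u := fun j => x j - (p j + e * w j))
    (x := fun j => x j - p j) (w := w) (c := - e).
    by rewrite -/a sqrrN; lra.
  by move=> j; ring.
rewrite leNgt; apply/negP => a0.
set W := sqnorm w in W0 step.
have aW : 0 < a + W by lra.
set e := a / (a + W).
have eaW : e * (a + W) = a by rewrite mulfVK // gt_eqF.
have e0 : 0 < e by rewrite divr_gt0.
have e1 : e <= 1 by rewrite ler_pdivrMr // mul1r; lra.
have := step e; rewrite e0 e1 => /(_ isT).
nra.
Qed.

Lemma dotpZr x w (c : R) : dotp x (fun j => c * w j) = c * dotp x w.
Proof. by rewrite /dotp mulr_sumr; apply: eq_bigr => j _; ring. Qed.

Lemma norm_dotp_le h k : (forall j, `|h j| <= 1) -> (forall j, `|k j| <= 1) ->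
  `|dotp h k| <= m%:R.
Proof.
move=> h1 k1; apply: le_trans (ler_norm_sum _ _ _) _.
rewrite -[m in m%:R]card_ord -sumr_const; apply: ler_sum => j _.
by rewrite normrM -[1]mulr1 ler_pM.
Qed.

Lemma sqnorm_le_dim h : (forall j, `|h j| <= 1) -> sqnorm h <= m%:R.
Proof.
move=> h1; rewrite -[m in m%:R]card_ord -sumr_const; apply: ler_sum => j _.
by have := h1 j; rewrite ler_norml => /andP[]; nra.
Qed.

Lemma norm_coord_le_norm2 x i : `|x i| <= norm2 x.
Proof.
rewrite /norm2 -sqrtr_sqr ler_sqrt ?sqnorm_ge0 // /sqnorm (bigD1 i) //= lerDl.
by apply: sumr_ge0 => j _; exact: sqr_ge0.
Qed.

Lemma norm2_le_add_sqrt x (a c : R) : 0 <= a -> 0 <= c ->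
  sqnorm x <= a ^+ 2 + c -> norm2 x <= a + Num.sqrt c.
Proof.
move=> a0 c0 xle; have ac0 : 0 <= a + Num.sqrt c by rewrite addr_ge0 ?sqrtr_ge0.
rewrite /norm2 -(ger0_norm ac0) -sqrtr_sqr ler_sqrt ?sqr_ge0 //.
rewrite sqrrD sqr_sqrtr // (le_trans xle) //.
have := mulr_ge0 a0 (sqrtr_ge0 c); rewrite mulr2n; lra.
Qed.

End Euclidean.

Section IsotonicCone.
Variables (R : realType) (m : nat).
Implicit Types (q w : 'I_m -> R).

Lemma isoK_subr_covind q (y delta : R) : isoK q -> 0 <= delta ->
  (forall j, q j < y -> delta <= y - q j) ->
  isoK (fun j => q j - delta * covind y (q j)).
Proof.
move=> qK d0 gap i j ij; have qij := qK i j ij; rewrite /covind.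
case: (lerP y (q i)) => yi; first by rewrite (le_trans yi qij) /=; lra.
have := gap i yi; case: (lerP y (q j)) => /= yj; lra.
Qed.

Lemma exists_covind_gap q (y : R) :
  exists2 delta : R, 0 < delta & forall j, q j < y -> delta <= y - q j.
Proof.
pose gap j := if q j < y then y - q j else 1.
exists (\big[Num.min/1]_j gap j).
  by apply: lt_bigmin => // j _; rewrite /gap; case: ifP => // /[!subr_gt0].
by move=> j qj; have := bigmin_le 1 j gap; rewrite /gap qj.
Qed.

End IsotonicCone.

Section ShiftedIsotonicProjection.
Variables (R : realType) (m : nat) (b x p : 'I_m -> R).
Hypothesis p_proj : is_proj (shiftK b) x p.

Lemma proj_shiftK_dotp_isoK_le0 w : isoK w -> dotp (fun j => x j - p j) w <= 0.
Proof.
move=> wK; apply: proj_dotp_dir_le0 p_proj _ => e /andP[e0 _] i j ij /=.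
by have := p_proj.1 i j ij; have := wK i j ij; nra.
Qed.

Lemma proj_shiftK_dotp_covind_ge0 (y : R) :
  0 <= dotp (fun j => x j - p j) (fun j => covind y (b j + p j)).
Proof.
have qK : isoK (fun j => b j + p j).
  by move=> i j ij; rewrite addrC [b j + _]addrC; exact: p_proj.1.
have [delta d0 gap] := exists_covind_gap (fun j => b j + p j) y.
suff : dotp (fun j => x j - p j) (fun j => - delta * covind y (b j + p j)) <= 0.
  by rewrite dotpZr mulNr oppr_le0 pmulr_rge0.
apply: proj_dotp_dir_le0 p_proj _ => e /andP[e0 e1] i j ij /=.
have gap' k : b k + p k < y -> e * delta <= y - (b k + p k).
  by move=> /gap; nra.
have := isoK_subr_covind qK (mulr_ge0 (ltW e0) (ltW d0)) gap' ij.
rewrite /=; lra.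
Qed.
End ShiftedIsotonicProjection.

Lemma covind_offset_ge (R : realType) (y b th a Rb : R) :
  `|y - b| <= Rb -> 0 < a < 1 -> - Rb <= th * (covind y (b + th) - a).
Proof.
rewrite ler_norml /covind => /andP[y1 y2] /andP[a0 a1].
by case: (lerP y (b + th)) => /= h; nra.
Qed.

Lemma dA_gt0 (R : realType) (m : nat) (alpha : 'I_m -> R) :
  (forall i, 0 < alpha i < 1) -> 0 < dA alpha.
Proof.
move=> a01; apply: lt_bigmin => // j _; have /andP[a0 a1] := a01 j.
by rewrite lt_min a0 subr_gt0.
Qed.

Lemma dA_le1 (R : realType) (m : nat) (alpha : 'I_m -> R) : dA alpha <= 1.
Proof. exact: bigmin_le_id. Qed.

Section MultiQTDynamics.
Variables (R : realType) (m : nat) (alpha : 'I_m -> R)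
  (b : nat -> 'I_m -> R) (y : nat -> R) (Rb : R) (D : nat) (eta : R)
  (thtil theta : nat -> 'I_m -> R).
Hypothesis alpha_incr : forall i j : 'I_m, (i < j)%N -> alpha i < alpha j.
Hypothesis alpha01 : forall i, 0 < alpha i < 1.
Hypothesis eta_gt0 : 0 < eta.
Hypothesis y_near_b : forall t i, (1 <= t)%N -> `|y t - b t i| <= Rb.
Hypothesis theta_proj : forall t, (1 <= t)%N -> is_proj (shiftK (b t)) (thtil t) (theta t).
Hypothesis thtil_update : forall t i, (1 <= t)%N -> (D < t)%N ->
  thtil t.+1 i = thtil t i
    - eta * (covind (y (t - D)%N) (b (t - D)%N i + theta (t - D)%N i) - alpha i).
Hypothesis thtil_frozen : forall t, (1 <= t)%N -> (t <= D)%N -> thtil t.+1 = thtil t.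

Let g s j := covind (y s) (b s j + theta s j) - alpha j.

Lemma norm_g_le1 s j : `|g s j| <= 1.
Proof.
have /andP[a0 a1] := alpha01 j; rewrite /g /covind.
by case: (y s <= _); rewrite /= ler_norml; apply/andP; split; lra.
Qed.

Lemma thtil_warmup k : (k <= D)%N -> thtil k.+1 = thtil 1.
Proof. by elim: k => [//|k IH] kD; rewrite thtil_frozen // IH // ltnW. Qed.

Lemma dotp_thtil_step t h : (1 <= t)%N -> (forall j, `|h j| <= 1) ->
  `|dotp (thtil t.+1) h - dotp (thtil t) h| <= eta * m%:R.
Proof.
move=> t1 h1; have em0 : 0 <= eta * m%:R := mulr_ge0 (ltW eta_gt0) (ler0n _ _).
case: (leqP t D) => [tD|Dt]; first by rewrite thtil_frozen // subrr normr0.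
have -> : dotp (thtil t.+1) h - dotp (thtil t) h = - eta * dotp (g (t - D)%N) h.
  rewrite /dotp -sumrB mulr_sumr; apply: eq_bigr => j _.
  by rewrite thtil_update // /g; ring.
rewrite normrM normrN (gtr0_norm eta_gt0) ler_pM2l //.
exact: norm_dotp_le (norm_g_le1 _) h1.
Qed.

Lemma dotp_thtil_drift s k h : (1 <= s)%N -> (forall j, `|h j| <= 1) ->
  `|dotp (thtil (s + k)) h - dotp (thtil s) h| <= k%:R * (eta * m%:R).
Proof.
move=> s1 h1; elim: k => [|k IH]; first by rewrite addn0 subrr normr0 mul0r.
have := dotp_thtil_step (leq_trans s1 (leq_addr k s)) h1.
rewrite addnS; move: IH; rewrite !ler_norml -natr1 => /andP[a1 a2] /andP[a3 a4].
by apply/andP; split; lra.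
Qed.

Lemma dotp_thtil_g_ge s : (1 <= s)%N -> - (m%:R * Rb) <= dotp (thtil s) (g s).
Proof.
move=> s1; have proj := theta_proj s1.
set v := fun j => thtil s j - theta s j.
have -> : dotp (thtil s) (g s) = dotp (theta s) (g s)
    + dotp v (fun j => covind (y s) (b s j + theta s j)) - dotp v alpha.
  by rewrite /dotp -big_split -sumrB /=; apply: eq_bigr => j _; rewrite /v /g; ring.
have theta_g : - (m%:R * Rb) <= dotp (theta s) (g s).
  rewrite -mulrN mulr_natl -[m in _ *+ m]card_ord -sumr_const; apply: ler_sum => j _.
  exact: covind_offset_ge (y_near_b j s1) (alpha01 j).
have v_alpha : dotp v alpha <= 0.
  apply: (proj_shiftK_dotp_isoK_le0 proj) => i j; rewrite leq_eqVlt.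
  by case/orP => [/eqP/val_inj -> // | /alpha_incr/ltW].
have := proj_shiftK_dotp_covind_ge0 proj (y s); rewrite -/v; lra.
Qed.

Let growth := eta ^+ 2 * m%:R * (2 * D%:R + 1) + 2 * eta * m%:R * Rb.

Lemma sqnorm_thtil_step t : (D < t)%N -> sqnorm (thtil t.+1) <= sqnorm (thtil t) + growth.
Proof.
move=> Dt; have t1 : (1 <= t)%N by apply: leq_ltn_trans Dt.
set s := (t - D)%N; have s1 : (1 <= s)%N by rewrite subn_gt0.
have -> := sqnorm_affine (u := thtil t.+1) (x := thtil t) (w := g s) (c := - eta).
  2: by move=> j; rewrite thtil_update // mulNr.
have := dotp_thtil_drift D s1 (norm_g_le1 s).
rewrite (subnK (ltnW Dt)) ler_norml => /andP[drift _].
have dot_ge : - (m%:R * Rb) - D%:R * (eta * m%:R) <= dotp (thtil t) (g s).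
  by have := dotp_thtil_g_ge s1; lra.
have := ler_wpM2l (ltW eta_gt0) dot_ge.
have := ler_wpM2l (sqr_ge0 eta) (sqnorm_le_dim (norm_g_le1 s)).
rewrite sqrrN /growth; lra.
Qed.

Lemma sqnorm_thtil_le k : sqnorm (thtil (D.+1 + k)) <= sqnorm (thtil 1) + k%:R * growth.
Proof.
elim: k => [|k IH]; first by rewrite addn0 thtil_warmup // mul0r addr0.
rewrite addnS -natr1; have := sqnorm_thtil_step (leq_addr k D.+1).
rewrite addSn; lra.
Qed.

Lemma sum_g_telescope T i :
  eta * \sum_(1 <= s < T.+1) g s i = thtil 1 i - thtil (D.+1 + T) i.
Proof.
elim: T => [|T IH]; first by rewrite big_geq // mulr0 addn0 thtil_warmup // subrr.
have DT1 : (D.+1 + T - D = T.+1)%N by rewrite addSn -addnS addKn.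
rewrite big_nat_recr //= mulrDr IH addnS (thtil_update (t := D.+1 + T)) ?DT1 //.
  by rewrite /g; ring.
by rewrite addSn ltnS leq_addr.
Qed.

Lemma coverage_error_le T i : (1 <= T)%N ->
  `| (\sum_(1 <= t < T.+1) covind (y t) (b t i + theta t i)) / T%:R - alpha i |
    <= (2 * norm2 (thtil 1) + Num.sqrt (T%:R * growth)) / (eta * T%:R).
Proof.
move=> T1; have T0 : 0 < T%:R :> R by rewrite ltr0n.
have etaT : 0 < eta * T%:R by rewrite mulr_gt0.
have -> : (\sum_(1 <= t < T.+1) covind (y t) (b t i + theta t i)) / T%:R - alpha i
    = (thtil 1 i - thtil (D.+1 + T) i) / (eta * T%:R).
  rewrite -sum_g_telescope /g sumrB sumr_const_nat subn1 /= -mulr_natl.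
  by field; rewrite !gt_eqF.
rewrite normrM normfV (gtr0_norm etaT) ler_pM2r ?invr_gt0 //.
have Rb0 : 0 <= Rb := le_trans (normr_ge0 _) (y_near_b i (ltn0Sn 0)).
have two0 := ler0n R 2; have eta0 := ltW eta_gt0.
have growth0 : 0 <= T%:R * growth.
  apply: mulr_ge0 (ltW T0) (addr_ge0 _ _).
    apply: mulr_ge0 (mulr_ge0 (sqr_ge0 _) (ler0n _ _)) (addr_ge0 _ ler01).
    exact: mulr_ge0 two0 (ler0n _ _).
  exact: mulr_ge0 (mulr_ge0 (mulr_ge0 two0 eta0) (ler0n _ _)) Rb0.
have n1 := sqrtr_ge0 (sqnorm (thtil 1)).
have := norm2_le_add_sqrt (x := thtil (D.+1 + T)) n1 growth0.
rewrite sqr_sqrtr ?sqnorm_ge0 // => /(_ (sqnorm_thtil_le T)).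
have := norm_coord_le_norm2 (thtil 1) i; have := norm_coord_le_norm2 (thtil (D.+1 + T)) i.
rewrite /norm2; have := ler_normB (thtil 1 i) (thtil (D.+1 + T) i); lra.
Qed.

End MultiQTDynamics.

Lemma sqrt_growth_div_le (R : realType) (m D T : nat) (eta Rb d : R) :
  (0 < m)%N -> (0 < T)%N -> 0 < eta -> 0 <= Rb -> 0 < d -> d <= 1 ->
  Num.sqrt (T%:R * (eta ^+ 2 * m%:R * (2 * D%:R + 1) + 2 * eta * m%:R * Rb))
    / (eta * T%:R)
  <= Num.sqrt (m%:R * (2 * D%:R + 1) / T%:R
               + 2 * Rb * (m%:R * Num.sqrt m%:R) / (eta * d * T%:R)).
Proof.
move=> m0 T0 eta0 Rb0 d0 d1.
have T0' : 0 < T%:R :> R by rewrite ltr0n.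
have etaT : 0 < eta * T%:R by rewrite mulr_gt0.
have sqrtm1 : 1 <= Num.sqrt (m%:R : R) by rewrite -[X in X <= _]sqrtr1 ler_sqrt ?ler1n.
set Y := (X in _ <= Num.sqrt X).
have [eta0' d0'] := (ltW eta0, ltW d0).
have Y0 : 0 <= Y.
  by rewrite addr_ge0 // divr_ge0 ?mulr_ge0 ?addr_ge0 ?mulr_ge0 ?ler0n ?ler01 ?sqrtr_ge0.
rewrite ler_pdivrMr // -(ger0_norm (ltW etaT)) -sqrtr_sqr -sqrtrM // ler_sqrt; last first.
  by rewrite mulr_ge0 ?sqr_ge0.
have -> : Y * (eta * T%:R) ^+ 2 = eta ^+ 2 * T%:R * (m%:R * (2 * D%:R + 1))
    + 2 * Rb * (m%:R * Num.sqrt m%:R) * eta * T%:R / d.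
  by rewrite /Y; field; rewrite !gt_eqF.
have : 2 * eta * m%:R * Rb * T%:R <= 2 * Rb * (m%:R * Num.sqrt m%:R) * eta * T%:R / d.
  rewrite ler_pdivlMr //.
  have hh : 0 <= 2 * eta * m%:R * Rb * T%:R by rewrite ?mulr_ge0 ?ler0n.
  nra.
lra.
Qed.

Theorem proposition7 (R : realType) (m : nat) (alpha : 'I_m -> R)
  (b : nat -> 'I_m -> R) (y : nat -> R) (Rb : R) (D : nat) (eta : R)
  (thtil theta : nat -> 'I_m -> R) :
  (0 < m)%N ->
  (forall i j : 'I_m, (i < j)%N -> alpha i < alpha j) ->
  (forall i, 0 < alpha i < 1) ->
  0 < Rb -> 0 < eta ->
  (forall t, (1 <= t)%N -> isoK (b t)) ->
  (forall t i, (1 <= t)%N -> `|y t - b t i| <= Rb) ->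
  isoK (thtil 1%N) ->
  (* theta_t = Pi_{K - b_t}(thtil_t); the forecast is q_t = b_t + theta_t *)
  (forall t, (1 <= t)%N -> is_proj (shiftK (b t)) (thtil t) (theta t)) ->
  (* delayed update of the hidden offset *)
  (forall t i, (1 <= t)%N -> (D < t)%N ->
     thtil t.+1 i = thtil t i
       - eta * (covind (y (t - D)%N) (b (t - D)%N i + theta (t - D)%N i) - alpha i)) ->
  (forall t, (1 <= t)%N -> (t <= D)%N -> thtil t.+1 = thtil t) ->
  forall (T : nat) (i : 'I_m), (1 <= T)%N ->
    `| (\sum_(1 <= t < T.+1) covind (y t) (b t i + theta t i)) / T%:R - alpha i |
      <= 2 * norm2 (thtil 1%N) / (eta * T%:R)
         + Num.sqrt (m%:R * (2 * D%:R + 1) / T%:R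
                     + 2 * Rb * (m%:R * Num.sqrt m%:R) / (eta * dA alpha * T%:R))
         + D%:R * Num.sqrt m%:R / T%:R.
Proof.
move=> m0 alpha_incr alpha01 Rb0 eta0 _ y_near_b _ theta_proj thtil_update thtil_frozen T i T1.
have := coverage_error_le alpha_incr alpha01 eta0 y_near_b theta_proj thtil_update
  thtil_frozen i T1.
have := sqrt_growth_div_le D m0 T1 eta0 (ltW Rb0) (dA_gt0 alpha01) (dA_le1 alpha).
have : 0 <= D%:R * Num.sqrt m%:R / T%:R :> R.
  by rewrite divr_ge0 ?mulr_ge0 ?sqrtr_ge0 ?ler0n.
rewrite mulrDl; lra.
Qed.
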